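(* Let $\theta>1$, $r\in(\theta^{-1},\theta^{-1/2}]$ and $s=\max\big(1,\frac{\ln\theta}{\ln(r\theta)}-2\big)$. There is a constant $C'>0$ depending only on $(s,\theta)$ such that the following holds. Let $p^*\in[1,\theta]$, suppose the random price sequence has maximum $P^*=p^*$ almost surely, and let $Y\sim\mathrm{Unif}([p^*(1-\epsilon'),p^*(1+\epsilon')])$ with $0<\epsilon'\le\min\{1-1/p^*,\ \theta/p^*-1\}$. Then \[ \frac{\mathbb{E}[\mathsf{A}^1_r(P,Y)]}{\mathbb{E}[P^*]}\ \ge\ \frac{1}{r\theta}\Big(1-\frac{s}{2}\epsilon'-C'\epsilon'^2\Big). \]
   Context: One-max search: fix $\theta>1$. Prices $p_1,\dots,p_n\in[1,\theta]$ are revealed one at a time; the algorithm receives at the start a prediction $y\in[1,\theta]$ of the maximum price. At each step it irrevocably accepts the current price (payoff = that price) or rejects it; if nothing is accepted the payoff is $1$. Let $\varphi_r(z)=\frac{r\theta-1}{1-r}+\frac{1-r^2\theta}{1-r}\cdot\frac{z}{r\theta}$ and $\Phi^1_r(z)=\max(r\theta,\varphi_r(z))$; $\mathsf{A}^1_r$ accepts the first price $p_i\ge\Phi^1_r(y)$, and $\mathsf{A}^1_r(P,Y)$ is its payoff on the realized prices and prediction. *)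

From HB Require Import structures.
From mathcomp Require Import all_boot all_order all_algebra.
From mathcomp Require Import all_classical all_reals all_analysis.
Set Implicit Arguments. Unset Strict Implicit. Unset Printing Implicit Defensive.
Import Order.TTheory GRing.Theory Num.Theory.
Local Open Scope ring_scope.

Section OneMax.
Variable R : realType.

Definition phi_r (theta r z : R) : R :=
  (r * theta - 1) / (1 - r) + (1 - r ^+ 2 * theta) / (1 - r) * (z / (r * theta)).

Definition Phi1 (theta r z : R) : R := Num.max (r * theta) (phi_r theta r z).

Fixpoint accept_first (t : R) (ps : seq R) : R :=
  match ps with
  | [::] => 1
  | p :: ps' => if t <= p then p else accept_first t ps'
  end.

Definition A1 (theta r : R) (ps : seq R) (y : R) : R :=
  accept_first (Phi1 theta r y) ps.

(* Maximum price of the sequence (n >= 1 prices, all >= 1). *)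
Definition maxprice (n : nat) (ps : 'I_n -> R) : R :=
  \big[Num.max/1]_(i < n) ps i.

Definition s_param (theta r : R) : R :=
  Num.max 1 (ln theta / ln (r * theta) - 2).

End OneMax.

From HB Require Import structures.
From mathcomp Require Import all_boot all_order all_algebra.
From mathcomp Require Import all_classical all_reals all_analysis.
From mathcomp Require Import measurable_realfun.
From mathcomp Require Import ring lra.
Set Implicit Arguments. Unset Strict Implicit. Unset Printing Implicit Defensive.
Import Order.TTheory GRing.Theory Num.Theory.
Local Open Scope classical_set_scope.
Local Open Scope ring_scope.

(* Write x = r theta.  On [1, theta] the threshold is Phi(z) = max(x, a + b z)
   with 0 <= b <= 1/x and a = theta (1/x - b) = (1 - b) x; in particular
   Phi(p) <= p as soon as p >= x.  Whenever Phi(Y) <= p* the algorithm sells at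
   a price >= Phi(Y), and Y falls in [p*(1-eps), p*] and in (p*, p*(1+eps)] with
   probability 1/2 each.  If Phi(p*(1+eps)) <= p*, averaging gives
   E[A] >= a + b p*(1 - eps/2) >= p*(1 - s eps/2)/x.  Otherwise, for eps below a
   critical value depending only on (s, theta), necessarily 2 p* < x (x + 1),
   while the lower half alone gives E[A] >= (x + 1)/2.  Above that value the
   quadratic term makes the claimed bound negative, and E[A] >= 1 settles the
   case p* < x. *)

Section AcceptFirst.
Variable R : realType.
Implicit Types (t : R) (ps : seq R).

Lemma accept_first_mem t ps : accept_first t ps \in 1 :: ps.
Proof.
elim: ps => [|p ps IH] /=; first by rewrite mem_head.
case: ifP => _; first by rewrite !inE eqxx orbT.
by move: IH; rewrite !inE => /orP[->|->]; rewrite ?orbT.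
Qed.

Lemma accept_first_ge t ps : has (fun v => t <= v) ps -> t <= accept_first t ps.
Proof. by elim: ps => [|p ps IH] //= /orP[tp|/IH]; case: ifP; rewrite ?tp. Qed.

Lemma accept_first_ge_max t n (F : 'I_n -> R) :
  1 < t -> t <= \big[Num.max/1]_(i < n) F i ->
  t <= accept_first t [seq F i | i <- enum 'I_n].
Proof.
move=> t1 t_le_max; apply: accept_first_ge; apply: contraLR t_le_max.
rewrite has_map -all_predC -ltNge => /allP F_lt.
apply/bigmax_ltP; split => // i _.
by rewrite ltNge; apply: F_lt; rewrite mem_enum.
Qed.

End AcceptFirst.

Section Measurability.
Context (R : realType) (d : measure_display) (T : measurableType d).

Lemma measurable_bigmax (I : Type) (s : seq I) (F : I -> T -> R) :
  (forall i, measurable_fun setT (F i)) ->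
  measurable_fun setT (fun w => \big[Num.max/1]_(i <- s) F i w).
Proof.
move=> mF; elim: s => [|i s IH].
  by under eq_fun do rewrite big_nil; exact: measurable_cst.
by under eq_fun do rewrite big_cons; exact: measurable_maxr.
Qed.

Lemma measurable_accept_first (I : Type) (s : seq I) (t : T -> R) (F : I -> T -> R) :
  measurable_fun setT t -> (forall i, measurable_fun setT (F i)) ->
  measurable_fun setT (fun w => accept_first (t w) [seq F i w | i <- s]).
Proof.
move=> mt mF; elim: s => [|i s IH] /=; first exact: measurable_cst.
by apply: measurable_fun_ifT => //; exact: measurable_fun_ler.
Qed.

End Measurability.

Lemma integral_uniform_pdf_itv (R : realType) (L U : R) (i : interval R) :
  L < U -> [set` i] `<=` `[L, U] ->
  (\int[lebesgue_measure]_(x in [set` i]) (uniform_pdf L U x)%:E =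
   (U - L)^-1%:E * lebesgue_measure [set` i])%E.
Proof.
move=> LU iLU; rewrite integral_uniform_pdf setIidl //.
rewrite (eq_integral (fun=> (U - L)^-1%:E)) ?integral_cst //.
by move=> y /[!inE] /iLU; rewrite /= in_itv /uniform_pdf => ->.
Qed.

Lemma step_le_integral d (T : measurableType d) (R : realType)
    (Pr : probability T R) (f : T -> R) (A B : set T) (c1 c2 : R) :
  measurable A -> measurable B -> 0 <= c1 -> 0 <= c2 ->
  measurable_fun setT f -> (forall w, 0 <= f w) ->
  {ae Pr, forall w, 1 + c1 * \1_A w + c2 * \1_B w <= f w} ->
  (1 + c1%:E * Pr A + c2%:E * Pr B <= \int[Pr]_w (f w)%:E)%E.
Proof.
move=> mA mB c1_ge0 c2_ge0 mf f_ge0 f_ge.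
have mstep (c : R) (D : set T) :
    measurable D -> measurable_fun setT (fun w => (c * \1_D w)%:E).
  move=> mD; apply/measurable_EFinP.
  by apply: measurable_funM => //; exact: measurable_indic.
have step_ge0 (c : R) (D : set T) : 0 <= c ->
    forall w, [set: T] w -> (0 <= (c * \1_D w)%:E)%E.
  by move=> c0 w _; rewrite lee_fin mulr_ge0.
have int_step (c : R) (D : set T) : measurable D -> 0 <= c ->
    (\int[Pr]_w (c * \1_D w)%:E = c%:E * Pr D)%E.
  move=> mD c0; rewrite (integralZl_indic _ (fun=> D)) ?integral_indic ?setIT //.
  by rewrite ltNge c0.
have m1A : measurable_fun setT (fun w => (1 + (c1 * \1_A w)%:E)%E).
  by apply: (emeasurable_funD (f := cst 1%E)) => //; exact: mstep.
have sum_ge0 w : [set: T] w -> (0 <= 1 + (c1 * \1_A w)%:E)%E.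
  by move=> Tw; rewrite adde_ge0 ?step_ge0.
have int_step_sum :
    (\int[Pr]_w ((1 + (c1 * \1_A w)%:E) + (c2 * \1_B w)%:E) =
     1 + c1%:E * Pr A + c2%:E * Pr B)%E.
  rewrite (ge0_integralD Pr measurableT sum_ge0 m1A (step_ge0 _ _ c2_ge0)
    (mstep _ _ mB)).
  rewrite (ge0_integralD Pr measurableT (f1 := cst 1%E) _ _
    (step_ge0 _ _ c1_ge0) (mstep _ _ mA)) //.
  by rewrite integral_cst //= probability_setT mul1e !int_step.
rewrite -int_step_sum; apply: ae_ge0_le_integral => //.
- by move=> w Tw; rewrite adde_ge0 ?sum_ge0 ?step_ge0.
- by apply: (emeasurable_funD m1A); exact: mstep.
- by move=> w _; rewrite lee_fin.
- exact/measurable_EFinP.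
- by apply: filterS f_ge => w f_ge_w _; rewrite -!EFinD lee_fin.
Qed.

Lemma sqr_mul_le1 (R : realType) (theta r : R) : 0 < theta -> 0 <= r ->
  r <= Num.sqrt theta^-1 -> r ^+ 2 * theta <= 1.
Proof.
move=> theta_gt0 r_ge0 r_le; rewrite -ler_pdivlMr // div1r.
by rewrite -[leRHS]sqr_sqrtr ?invr_ge0 ?(ltW theta_gt0) // ler_pXn2r ?nnegrE ?sqrtr_ge0.
Qed.

Definition phi_icpt (R : realType) (theta r : R) : R := (r * theta - 1) / (1 - r).

Definition phi_slope (R : realType) (theta r : R) : R :=
  (1 - r ^+ 2 * theta) / ((1 - r) * (r * theta)).

(* With m = theta^(1/(s+2)) - 1 <= r theta - 1 (by the choice of s),
   eps <= m^2 / (2 theta) forces (r theta + 1) eps <= (r theta - 1)^2. *)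
Definition eps_crit (R : realType) (s theta : R) : R :=
  (expR (ln theta / (s + 2)) - 1) ^+ 2 / (2 * theta).

Section Threshold.
Variables (R : realType) (theta r : R).
Hypotheses (theta_gt1 : 1 < theta) (r_gt : theta^-1 < r)
  (r_le : r ^+ 2 * theta <= 1).

Local Notation x := (r * theta).
Local Notation a := (phi_icpt theta r).
Local Notation b := (phi_slope theta r).

Lemma theta_gt0 : 0 < theta.
Proof. exact: lt_trans ltr01 theta_gt1. Qed.

Lemma r_gt0 : 0 < r.
Proof. by apply: lt_trans _ r_gt; rewrite invr_gt0 (lt_trans ltr01). Qed.

Lemma rtheta_gt1 : 1 < x.
Proof. by rewrite -(mulVf (lt0r_neq0 theta_gt0)) ltr_pM2r ?theta_gt0. Qed.

Lemma rtheta_gt0 : 0 < x.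
Proof. exact: lt_trans ltr01 rtheta_gt1. Qed.

Lemma r_lt1 : r < 1.
Proof.
have := rtheta_gt1; have := r_gt0; have := r_le.
rewrite expr2; nra.
Qed.

Lemma rtheta_le : x <= theta.
Proof. by rewrite ger_pMl ?theta_gt0 // ltW // r_lt1. Qed.

Lemma phi_rE z : phi_r theta r z = a + b * z.
Proof.
by rewrite /phi_r /phi_icpt /phi_slope; field;
  rewrite !gt_eqF ?theta_gt0 ?r_gt0 ?subr_gt0 ?r_lt1.
Qed.

Lemma phi_slope_ge0 : 0 <= b.
Proof.
by rewrite divr_ge0 ?mulr_ge0 ?subr_ge0 // ltW // (r_lt1, r_gt0, theta_gt0).
Qed.

Lemma phi_slope_le : b <= x^-1.
Proof.
rewrite /phi_slope ler_pdivrMr ?mulr_gt0 ?subr_gt0 ?r_lt1 ?r_gt0 ?theta_gt0 //.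
rewrite [leRHS]mulrC (mulfK (lt0r_neq0 rtheta_gt0)).
have := r_le; have := r_gt0; have := rtheta_gt1; rewrite expr2 -mulrA; nra.
Qed.

Lemma phi_slope_mul_le1 : b * x <= 1.
Proof. by rewrite -ler_pdivlMr ?div1r ?phi_slope_le ?rtheta_gt0. Qed.

Lemma phi_icptE : a = (1 - b) * x.
Proof.
by rewrite /phi_icpt /phi_slope; field;
  rewrite !gt_eqF ?theta_gt0 ?r_gt0 ?subr_gt0 ?r_lt1.
Qed.

Lemma phi_icptE_theta : a = theta * (x^-1 - b).
Proof.
by rewrite /phi_icpt /phi_slope; field;
  rewrite !gt_eqF ?theta_gt0 ?r_gt0 ?subr_gt0 ?r_lt1.
Qed.

Lemma Phi1E z : Phi1 theta r z = Num.max x (a + b * z).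
Proof. by rewrite /Phi1 phi_rE. Qed.

Lemma Phi1_ge z : x <= Phi1 theta r z.
Proof. by rewrite Phi1E le_max lexx. Qed.

Lemma phi_le_Phi1 z : a + b * z <= Phi1 theta r z.
Proof. by rewrite Phi1E le_max lexx orbT. Qed.

Lemma Phi1_homo : {homo Phi1 theta r : y z / y <= z}.
Proof.
move=> y z yz; rewrite !Phi1E ge_max le_max lexx le_max lerD2l.
by rewrite ler_wpM2l ?orbT // phi_slope_ge0.
Qed.

Lemma Phi1_le_id p : x <= p -> Phi1 theta r p <= p.
Proof.
move=> xp; rewrite Phi1E ge_max xp phi_icptE /=.
have := phi_slope_ge0; have := phi_slope_mul_le1; have := rtheta_gt1; nra.
Qed.

Lemma phi_competitive s e p : 1 <= s -> 0 <= e -> 0 <= p <= theta ->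
  x^-1 * (1 - s / 2 * e) * p <= a + b * (p * (1 - e / 2)).
Proof.
move=> s1 e0 /andP[p0 pth]; rewrite phi_icptE_theta.
have := phi_slope_ge0; have := phi_slope_le => ? ?.
have ix0 : 0 < x^-1 by rewrite invr_gt0 rtheta_gt0.
have : 0 <= (x^-1 - b) * (theta - p) by rewrite mulr_ge0 // subr_ge0.
have : 0 <= (x^-1 * s - b) * (e * p) by rewrite mulr_ge0 ?mulr_ge0 // subr_ge0; nra.
nra.
Qed.

Lemma price_lt_of_phi_gt p e : x <= p -> 0 <= e ->
  (x + 1) * e <= (x - 1) ^+ 2 -> p < a + b * (p * (1 + e)) ->
  2 * p < x * (x + 1).
Proof.
move=> xp e0 ecrit; rewrite phi_icptE.
have := phi_slope_ge0; have := phi_slope_mul_le1; have := rtheta_gt1 => ? ? ? p_lt_phi.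
have : (x - 1) * (p - x) < p * e by nra.
nra.
Qed.

Lemma s_param_ge1 : 1 <= s_param theta r.
Proof. by rewrite /s_param le_max lexx. Qed.

Lemma root_le_rtheta : expR (ln theta / (s_param theta r + 2)) <= x.
Proof.
have lnx : 0 < ln x := ln_gt0 rtheta_gt1.
have s2 : 0 < s_param theta r + 2 by have := s_param_ge1; lra.
rewrite -[leRHS]lnK ?posrE ?rtheta_gt0 // ler_expR.
rewrite ler_pdivrMr // mulrC -ler_pdivrMr //.
by rewrite -lerBlDr /s_param le_max lexx orbT.
Qed.

Lemma eps_below_crit (e : R) : 0 <= e -> e <= eps_crit (s_param theta r) theta ->
  (x + 1) * e <= (x - 1) ^+ 2.
Proof.
rewrite /eps_crit => e0; have := root_le_rtheta.
set m := expR _ => mx; rewrite ler_pdivlMr ?mulr_gt0 ?theta_gt0 // => e_crit.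
have m1 : 1 < m.
  by rewrite expR_gt1 divr_gt0 ?ln_gt0 //; have := s_param_ge1; lra.
have := rtheta_le; nra.
Qed.

End Threshold.

Lemma eps_crit_gt0 (R : realType) (s theta : R) : 1 < theta -> 0 < s + 2 ->
  0 < eps_crit s theta.
Proof.
move=> theta_gt1 s2_gt0; rewrite /eps_crit divr_gt0 ?exprn_gt0 ?subr_gt0 //.
  by rewrite expR_gt1 divr_gt0 ?ln_gt0.
by rewrite mulr_gt0 // (lt_trans ltr01).
Qed.

Section UniformPrediction.
Context (R : realType) (theta r : R).
Hypotheses (theta_gt1 : 1 < theta) (r_gt : theta^-1 < r)
  (r_le : r ^+ 2 * theta <= 1).
Context (d : measure_display) (T : measurableType d) (Pr : probability T R).
Context (n : nat) (P : 'I_n -> T -> R) (Y : T -> R) (p e : R).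
Hypotheses (mP : forall i, measurable_fun setT (P i))
  (P_range : forall i w, 1 <= P i w <= theta)
  (p_ge1 : 1 <= p) (p_le : p <= theta)
  (max_ae : {ae Pr, forall w, maxprice (fun i => P i w) = p})
  (e_gt0 : 0 < e) (mY : measurable_fun setT Y)
  (Y_law : forall U : set R, measurable U ->
     Pr (Y @^-1` U) =
     (\int[lebesgue_measure]_(x in U)
        (uniform_pdf (p * (1 - e)) (p * (1 + e)) x)%:E)%E).

Local Notation x := (r * theta).
Local Notation a := (phi_icpt theta r).
Local Notation b := (phi_slope theta r).
Local Notation Phi := (Phi1 theta r).
Local Notation s := (s_param theta r).
Local Notation payoff w := (A1 theta r [seq P i w | i <- enum 'I_n] (Y w)).
Local Notation expected_payoff := (\int[Pr]_w (payoff w)%:E)%E.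

Lemma payoff_range w : 1 <= payoff w <= theta.
Proof.
rewrite /A1; have /[!inE] /orP[/eqP->|/mapP[i _ ->]] // :=
  accept_first_mem (Phi (Y w)) [seq P i w | i <- enum 'I_n].
by rewrite lexx ltW.
Qed.

Lemma measurable_payoff : measurable_fun setT (fun w => payoff w).
Proof.
apply: measurable_accept_first => //.
under eq_fun do rewrite Phi1E //.
apply: (measurable_maxr (f := cst x)) => //.
apply: (measurable_funD (f := cst a)) => //.
exact: (measurable_funM (f := cst b)).
Qed.

Lemma expected_payoff_fin_num : expected_payoff \is a fin_num.
Proof.
have payoff_ge0 w : (0 <= (payoff w)%:E)%E.
  by rewrite lee_fin; case/andP: (payoff_range w) => /(le_trans ler01).
rewrite ge0_fin_numE ?integral_ge0 //.
apply: (@le_lt_trans _ _ (\int[Pr]_w (cst theta%:E) w)%E); last first.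
  by rewrite integral_cst //= probability_setT mule1 ltry.
apply: ge0_le_integral => //.
- exact/measurable_EFinP/measurable_payoff.
- by move=> w _; rewrite lee_fin; case/andP: (payoff_range w).
Qed.

Lemma step_le_expected_payoff (A B : set T) (c1 c2 pA pB : R) :
  measurable A -> measurable B -> 0 <= c1 -> 0 <= c2 ->
  Pr A = pA%:E -> Pr B = pB%:E ->
  {ae Pr, forall w, 1 + c1 * \1_A w + c2 * \1_B w <= payoff w} ->
  1 + c1 * pA + c2 * pB <= fine expected_payoff.
Proof.
move=> mA mB c1_ge0 c2_ge0 PrA PrB payoff_ge.
rewrite -lee_fin fineK ?expected_payoff_fin_num // !EFinD !EFinM -PrA -PrB.
apply: step_le_integral payoff_ge => // [|w].
- exact: measurable_payoff.
- by case/andP: (payoff_range w) => /(le_trans ler01).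
Qed.

Lemma expected_maxprice : (\int[Pr]_w (maxprice (fun i => P i w))%:E)%E = p%:E.
Proof.
rewrite (ae_eq_integral (cst p%:E)) //.
- by rewrite integral_cst //= probability_setT mule1.
- exact/measurable_EFinP/measurable_bigmax.
- by apply: filterS max_ae => w max_w _; rewrite max_w.
Qed.

Lemma payoff_ge_Phi_below c : Phi c <= p ->
  {ae Pr, forall w, Y w <= c -> Phi (Y w) <= payoff w}.
Proof.
move=> Phi_c_le; apply: filterS max_ae => w max_w Yw_le.
apply: accept_first_ge_max.
  exact: lt_le_trans (rtheta_gt1 _ _) (Phi1_ge _ _ _ _).
by rewrite -/(maxprice _) max_w (le_trans (Phi1_homo _ _ _ Yw_le)).
Qed.

Lemma measurable_Y_itv (i : interval R) : measurable (Y @^-1` [set` i]).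
Proof. by rewrite -[_ @^-1` _]setTI; exact: mY (measurable_itv i). Qed.

Lemma prob_Y_lower_half : Pr (Y @^-1` `[p * (1 - e), p]) = 2^-1%:E.
Proof.
have ep : 0 < e * p by rewrite mulr_gt0 // (lt_le_trans ltr01).
rewrite Y_law // integral_uniform_pdf_itv; last first.
- by apply: subset_itv; rewrite bnd_simp; nra.
- nra.
rewrite lebesgue_measure_itv /= lte_fin ifT; last nra.
by rewrite -EFinD -EFinM; congr EFin; field; nra.
Qed.

Lemma prob_Y_upper_half : Pr (Y @^-1` `]p, p * (1 + e)]) = 2^-1%:E.
Proof.
have ep : 0 < e * p by rewrite mulr_gt0 // (lt_le_trans ltr01).
rewrite Y_law // integral_uniform_pdf_itv; last first.
- by apply: subset_itv; rewrite bnd_simp; nra.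
- nra.
rewrite lebesgue_measure_itv /= lte_fin ifT; last nra.
by rewrite -EFinD -EFinM; congr EFin; field; nra.
Qed.

Lemma one_le_expected_payoff : 1 <= fine expected_payoff.
Proof.
have := @step_le_expected_payoff set0 set0 0 0 0 0.
rewrite !mul0r !addr0; apply => //; try exact: measure0.
apply: aeW => w.
by rewrite !mul0r !addr0; case/andP: (payoff_range w).
Qed.

Lemma expected_payoff_ge_mid : x <= p -> (x + 1) / 2 <= fine expected_payoff.
Proof.
move=> xp; have x_gt1 := rtheta_gt1 theta_gt1 r_gt.
have payoff_ge_lower : {ae Pr, forall w,
    1 + (x - 1) * \1_(Y @^-1` `[p * (1 - e), p]) w + 0 * \1_set0 w <= payoff w}.
  apply: filterS (payoff_ge_Phi_below (Phi1_le_id theta_gt1 r_gt r_le xp)).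
  move=> w payoff_ge; rewrite mul0r addr0 indicE.
  have [/[!inE] /= /[!in_itv] /andP[_ Yp]|_] := boolP (w \in _); last first.
    by rewrite mulr0 addr0; case/andP: (payoff_range w).
  by rewrite mulr1 addrC subrK (le_trans (Phi1_ge _ _ _ _) (payoff_ge Yp)).
have x1_ge0 : 0 <= x - 1 by rewrite subr_ge0 ltW.
have := step_le_expected_payoff (measurable_Y_itv _) measurable0 x1_ge0 (lexx 0)
  prob_Y_lower_half (measure0 _) payoff_ge_lower.
by rewrite mul0r addr0; apply: le_trans; lra.
Qed.

Lemma expected_payoff_ge_phi : x <= p -> Phi (p * (1 + e)) <= p ->
  a + b * (p * (1 - e / 2)) <= fine expected_payoff.
Proof.
move=> xp PhiU_le; have x_gt1 := rtheta_gt1 theta_gt1 r_gt.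
have Phi_homo := Phi1_homo theta_gt1 r_gt r_le.
have Phi_ge1 y : 0 <= Phi y - 1.
  by rewrite subr_ge0 (le_trans _ (Phi1_ge _ _ _ _)) // ltW.
have pU : p <= p * (1 + e) by rewrite ler_peMr ?(le_trans ler01) // lerDl ltW.
have payoff_ge_steps : {ae Pr, forall w,
    1 + (Phi (p * (1 - e)) - 1) * \1_(Y @^-1` `[p * (1 - e), p]) w +
        (Phi p - 1) * \1_(Y @^-1` `]p, p * (1 + e)]) w <= payoff w}.
  apply: filterS (payoff_ge_Phi_below PhiU_le) => w payoff_ge; rewrite !indicE.
  have [/[!inE] /= /[!in_itv] /andP[LY Yp]|_] := boolP (w \in Y @^-1` _).
    have [/[!inE] /= /[!in_itv] /andP[pY _]|_] := boolP (w \in Y @^-1` _).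
      by have := lt_le_trans pY Yp; rewrite ltxx.
    rewrite mulr1 mulr0 addr0 addrC subrK.
    exact: le_trans (Phi_homo _ _ LY) (payoff_ge (le_trans Yp pU)).
  have [/[!inE] /= /[!in_itv] /andP[pY YU]|_] := boolP (w \in Y @^-1` _).
    rewrite mulr0 mulr1 addr0 addrC subrK.
    exact: le_trans (Phi_homo _ _ (ltW pY)) (payoff_ge YU).
  by rewrite !mulr0 !addr0; case/andP: (payoff_range w).
have := step_le_expected_payoff (measurable_Y_itv _) (measurable_Y_itv _)
  (Phi_ge1 _) (Phi_ge1 _) prob_Y_lower_half prob_Y_upper_half payoff_ge_steps.
apply: le_trans.
have := phi_le_Phi1 theta_gt1 r_gt r_le (p * (1 - e)).
have := phi_le_Phi1 theta_gt1 r_gt r_le p.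
have -> : b * (p * (1 - e / 2)) = (b * (p * (1 - e)) + b * p) / 2 by field.
lra.
Qed.

Lemma expected_payoff_competitive :
  x^-1 * (1 - s / 2 * e - eps_crit s theta ^- 2 * e ^+ 2) * p
    <= fine expected_payoff.
Proof.
have x_gt1 := rtheta_gt1 theta_gt1 r_gt.
have ix_gt0 : 0 < x^-1 by rewrite invr_gt0 rtheta_gt0.
have p_gt0 : 0 < p := lt_le_trans ltr01 p_ge1.
have e_ge0 : 0 <= e := ltW e_gt0.
have s_ge1 : 1 <= s := s_param_ge1 theta r.
have crit_gt0 : 0 < eps_crit s theta by rewrite eps_crit_gt0 //; lra.
set C := eps_crit s theta ^- 2.
have C_ge0 : 0 <= C * e ^+ 2 by rewrite mulr_ge0 ?sqr_ge0 // invr_ge0 exprn_ge0 // ltW.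
have ratio_le1 : x^-1 * (1 - s / 2 * e - C * e ^+ 2) * p <= x^-1 * p.
  by rewrite -mulrA ler_pM2l // ler_piMl ?(ltW p_gt0) //; nra.
have [K_le0|K_gt0] := lerP (1 - s / 2 * e - C * e ^+ 2) 0.
  apply: le_trans one_le_expected_payoff.
  by apply: le_trans ler01; rewrite -mulrA pmulr_rle0 // mulr_le0_ge0 // ltW.
have [px|xp] := ltP p x.
  apply: le_trans one_le_expected_payoff; apply: le_trans ratio_le1 _.
  by rewrite mulrC ler_pdivrMr ?rtheta_gt0 // mul1r ltW.
have [PhiU_le|PhiU_gt] := leP (Phi (p * (1 + e))) p.
  apply: le_trans (expected_payoff_ge_phi xp PhiU_le).
  have p_range : 0 <= p <= theta by rewrite (ltW p_gt0) p_le.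
  apply: le_trans (phi_competitive theta_gt1 r_gt r_le s_ge1 e_ge0 p_range).
  by rewrite ler_wpM2r ?(ltW p_gt0) // ler_wpM2l ?(ltW ix_gt0) //; lra.
have e_lt_crit : e < eps_crit s theta.
  have : C * e ^+ 2 < 1 by nra.
  rewrite /C mulrC ltr_pdivrMr ?exprn_gt0 // mul1r.
  by rewrite ltr_pXn2r ?nnegrE ?(ltW crit_gt0).
have two_p_lt : 2 * p < x * (x + 1).
  apply: (price_lt_of_phi_gt theta_gt1 r_gt r_le xp e_ge0).
    exact: eps_below_crit theta_gt1 r_gt r_le _ e_ge0 (ltW e_lt_crit).
  by move: PhiU_gt; rewrite Phi1E // lt_max ltNge xp.
apply: le_trans (expected_payoff_ge_mid xp); apply: le_trans ratio_le1 _.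
by rewrite mulrC ler_pdivrMr //; nra.
Qed.

End UniformPrediction.

Theorem corollary5 (R : realType) :
  exists C' : R -> R -> R,
  forall (theta r : R), 1 < theta ->
    theta^-1 < r -> r <= Num.sqrt theta ^-1 ->
    let s := s_param theta r in
    0 < C' s theta /\
    forall (d : measure_display) (T : measurableType d) (Pr : probability T R)
      (n : nat) (P : 'I_n -> T -> R) (Y : T -> R) (pstar eps : R),
      (0 < n)%N ->
      (forall i, measurable_fun setT (P i)) ->
      (forall i w, 1 <= P i w <= theta) ->
      1 <= pstar <= theta ->
      {ae Pr, forall w, maxprice (fun i => P i w) = pstar} ->
      0 < eps -> eps <= Num.min (1 - pstar^-1) (theta / pstar - 1) ->
      measurable_fun setT Y ->
      (forall U : set R, measurable U ->
         Pr (Y @^-1` U) =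
         (\int[@lebesgue_measure R]_(x in U)
            (uniform_pdf (pstar * (1 - eps)) (pstar * (1 + eps)) x)%:E)%E) ->
      (r * theta)^-1 * (1 - s / 2 * eps - C' s theta * eps ^+ 2) <=
        fine (\int[Pr]_w (A1 theta r [seq P i w | i <- enum 'I_n] (Y w))%:E)%E /
        fine (\int[Pr]_w (maxprice (fun i => P i w))%:E)%E.
Proof.
exists (fun s theta => eps_crit s theta ^- 2).
move=> theta r theta_gt1 r_gt r_le_sqrt s.
have r_le := sqr_mul_le1 (theta_gt0 theta_gt1) (ltW (r_gt0 theta_gt1 r_gt)) r_le_sqrt.
split.
  rewrite invr_gt0 exprn_gt0 // eps_crit_gt0 // /s.
  by have := s_param_ge1 theta r; lra.
move=> d T Pr n P Y p e _ mP P_range /andP[p_ge1 p_le] max_ae e_gt0 _ mY Y_law.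
rewrite (expected_maxprice mP max_ae) /= ler_pdivlMr ?(lt_le_trans ltr01) //.
exact: expected_payoff_competitive.
Qed.
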